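(* Suppose there exists $\rho$ such that for every metric space $M$ and every $s\in M$ for which $d(s,p)$ is the same for all $p\in M\setminus\{s\}$, the infinite server problem on $(M,s)$ admits a strictly $\rho$-competitive online algorithm. Then for every metric space $M$ and every $s\in M$ the infinite server problem on $(M,s)$ is competitive.
   Context: Infinite server problem on $(M,s)$: $M$ is a metric space with metric $d$ and $s\in M$ the source; an unbounded number of servers initially reside at $s$. A finite sequence of requests (points of $M$) is revealed one by one; each must be served immediately, without knowledge of future requests, by moving some server to it; the cost is the total distance traveled. An online algorithm $ALG$ is strictly $\rho$-competitive if $ALG(\sigma)\le\rho\,OPT(\sigma)$ for all request sequences $\sigma$; the problem is competitive if some online algorithm satisfies $ALG(\sigma)\le\rho'\,OPT(\sigma)+c$ for all $\sigma$, for some constants $\rho',c$. *)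

From Stdlib Require Import Reals List.
From Coquelicot Require Import Coquelicot.
Import ListNotations.
Open Scope R_scope.

Record is_metric {M : Type} (d : M -> M -> R) : Prop := {
  metric_nonneg : forall x y, 0 <= d x y;
  metric_eq0 : forall x y, d x y = 0 <-> x = y;
  metric_sym : forall x y, d x y = d y x;
  metric_triangle : forall x y z, d x z <= d x y + d y z
}.

Definition uniform_source {M : Type} (d : M -> M -> R) (s : M) : Prop :=
  forall p q : M, p <> s -> q <> s -> d s p = d s q.

Definition config (M : Type) := nat -> M.

Definition upd {M : Type} (c : config M) (i : nat) (x : M) : config M :=
  fun j => if Nat.eqb j i then x else c j.

Fixpoint serve_cost {M : Type} (d : M -> M -> R) (f : nat -> nat)
    (k0 : nat) (c : config M) (sigma : list M) : R :=
  match sigma with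
  | [] => 0
  | r :: rest =>
      d (c (f k0)) r + serve_cost d f (S k0) (upd c (f k0) r) rest
  end.

Definition sched_cost {M : Type} (d : M -> M -> R) (s : M) (f : nat -> nat)
    (sigma : list M) : R :=
  serve_cost d f 0 (fun _ => s) sigma.

Definition OPT {M : Type} (d : M -> M -> R) (s : M) (sigma : list M) : R :=
  real (Glb_Rbar (fun x => exists f : nat -> nat, x = sched_cost d s f sigma)).

(** A deterministic online algorithm: given the past requests and the current
    request, it chooses which server moves to the current request. *)
Definition online_alg (M : Type) := list M -> M -> nat.

Definition alg_sched {M : Type} (s : M) (A : online_alg M) (sigma : list M)
    : nat -> nat :=
  fun k => A (firstn k sigma) (nth k sigma s).

Definition ALG {M : Type} (d : M -> M -> R) (s : M) (A : online_alg M)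
    (sigma : list M) : R :=
  sched_cost d s (alg_sched s A sigma) sigma.

Definition strictly_competitive {M : Type} (d : M -> M -> R) (s : M)
    (A : online_alg M) (rho : R) : Prop :=
  forall sigma : list M, ALG d s A sigma <= rho * OPT d s sigma.

Definition competitive {M : Type} (d : M -> M -> R) (s : M) : Prop :=
  exists (A : online_alg M) (rho c : R),
    forall sigma : list M, ALG d s A sigma <= rho * OPT d s sigma + c.

From Stdlib Require Import Reals List Lia Lra ZArith Cantor ClassicalEpsilon.
From Coquelicot Require Import Coquelicot.
Import ListNotations.
Open Scope R_scope.

(* Cut M \ {s} into rings: ring l holds the points at distance in [2^(l+1), 2^(l+2)) from s.
   Ring l, with distances truncated at 2^l and a new source at distance 2^l from all its points,
   is a uniform-source space, so it has a strictly rho-competitive algorithm A_l. The combined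
   algorithm serves a request of ring l by a server reserved for ring l, chosen by A_l; these
   servers never leave s and ring l, so each move costs at most 8 times the corresponding move
   of A_l, and ALG <= 8 sum_l ALG_l <= 8 rho sum_l OPT_l.  Conversely every schedule on M induces
   schedules on the rings of total cost at most 6 times its own, by an amortized argument with
   the potential d(s,x) + sum_l (min(d(q_l,x), 2^l) - ramp_l(d(s,x))) per server, where q_l is
   the last point of ring l the server visited and ramp_l rises from 0 to 2^l on
   [2^l, 2^(l+1)].  Hence ALG <= 48 rho OPT. *)

Ltac minmax_cases := unfold Rmin, Rmax; repeat destruct Rle_dec; lra.

Fixpoint sumR {A : Type} (g : A -> R) (L : list A) : R :=
  match L with [] => 0 | a :: L' => g a + sumR g L' end.

Section Sums.
Context {A : Type}.
Implicit Types (g h : A -> R) (L W : list A).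

Lemma sumR_le g h L : (forall a, In a L -> g a <= h a) -> sumR g L <= sumR h L.
Proof.
  induction L as [|a L IH]; simpl; intros Hgh; [lra|].
  pose proof (Hgh a (or_introl eq_refl)).
  assert (sumR g L <= sumR h L) by (apply IH; auto). lra.
Qed.

Lemma sumR_eq0 g L : (forall a, In a L -> g a = 0) -> sumR g L = 0.
Proof.
  induction L as [|a L IH]; simpl; intros Hg; [lra|].
  rewrite Hg, IH by auto. lra.
Qed.

Lemma sumR_add g h L : sumR (fun a => g a + h a) L = sumR g L + sumR h L.
Proof. induction L as [|a L IH]; simpl; [|rewrite IH]; lra. Qed.

Lemma sumR_opp g L : sumR (fun a => - g a) L = - sumR g L.
Proof. induction L as [|a L IH]; simpl; [|rewrite IH]; lra. Qed.

Lemma sumR_scal_l c g L : sumR (fun a => c * g a) L = c * sumR g L.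
Proof. induction L as [|a L IH]; simpl; [|rewrite IH]; lra. Qed.

Lemma sumR_nonneg g L : (forall a, In a L -> 0 <= g a) -> 0 <= sumR g L.
Proof. intros Hg. rewrite <- (sumR_eq0 (fun _ => 0) L) by auto. apply sumR_le; auto. Qed.

Lemma sumR_term_le g L a : (forall b, In b L -> 0 <= g b) -> In a L -> g a <= sumR g L.
Proof.
  induction L as [|b L IH]; simpl; intros Hg Ha; [contradiction|].
  destruct Ha as [<- | Ha].
  - assert (0 <= sumR g L) by (apply sumR_nonneg; auto). lra.
  - assert (g a <= sumR g L) by (apply IH; auto). specialize (Hg b (or_introl eq_refl)). lra.
Qed.

Lemma sumR_ext g h L : (forall a, In a L -> g a = h a) -> sumR g L = sumR h L.
Proof. intros E. apply Rle_antisym; apply sumR_le; intros a Ha; rewrite E by auto; lra. Qed.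

Lemma sumR_update g g' L a : NoDup L -> In a L -> (forall b, b <> a -> g' b = g b) ->
  sumR g' L = sumR g L + (g' a - g a).
Proof.
  induction L as [|b L IH]; simpl; intros Hnd Ha Hg'; [contradiction|].
  inversion Hnd as [|? ? HbL HndL]; subst.
  destruct Ha as [<- | Ha].
  - rewrite (sumR_ext g' g L); [lra|].
    intros c Hc. apply Hg'. intros ->. contradiction.
  - rewrite IH, Hg' by (auto; intros ->; contradiction). lra.
Qed.

Lemma sumR_le_support (eq_dec : forall a b : A, {a = b} + {a <> b}) g c W L :
  NoDup L -> 0 <= c -> (forall a, In a L -> g a <= c) ->
  (forall a, In a L -> ~ In a W -> g a <= 0) -> sumR g L <= INR (length W) * c.
Proof.
  revert W. induction L as [|a L IH]; simpl; intros W Hnd Hc Hle Hout.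
  - pose proof (pos_INR (length W)). nra.
  - inversion Hnd as [|? ? HaL HndL]; subst.
    destruct (in_dec eq_dec a W) as [HaW | HaW].
    + assert (Hrest : sumR g L <= INR (length (remove eq_dec a W)) * c).
      { apply IH; auto. intros b Hb HbW. apply Hout; [now right|].
        intros HbW'. apply HbW, in_in_remove; auto. intros ->. contradiction. }
      pose proof (remove_length_lt eq_dec W a HaW) as Hlen.
      apply le_INR in Hlen. rewrite S_INR in Hlen.
      specialize (Hle a (or_introl eq_refl)). nra.
    + pose proof (Hout a (or_introl eq_refl) HaW).
      assert (sumR g L <= INR (length W) * c) by (apply IH; auto; intros b Hb HbW; apply Hout; auto).
      lra.
Qed.

End Sums.

Definition pow2 (l : Z) : R := Rpower 2 (IZR l).

Lemma pow2_pos l : 0 < pow2 l.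
Proof. apply exp_pos. Qed.

Lemma pow2_succ l : pow2 (l + 1) = 2 * pow2 l.
Proof. unfold pow2. rewrite plus_IZR, Rpower_plus, Rpower_1 by lra. lra. Qed.

Lemma pow2_le l l' : (l <= l')%Z -> pow2 l <= pow2 l'.
Proof. intros H. apply Rle_Rpower; [lra | apply IZR_le; exact H]. Qed.

Lemma pow2_lt_inv l l' : pow2 l < pow2 l' -> (l < l')%Z.
Proof.
  intros H. destruct (Z_lt_le_dec l l') as [|Hle]; auto.
  apply pow2_le in Hle. lra.
Qed.

Definition log2_floor (u : R) : Z := Zfloor (ln u / ln 2).

Lemma log2_floor_spec u : 0 < u -> pow2 (log2_floor u) <= u < pow2 (log2_floor u + 1).
Proof.
  intros Hu. unfold pow2, log2_floor. set (t := ln u / ln 2).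
  assert (Hln2 : 0 < ln 2) by (rewrite <- ln_1; apply ln_increasing; lra).
  assert (Ht : Rpower 2 t = u).
  { unfold Rpower, t. replace (ln u / ln 2 * ln 2) with (ln u) by (field; lra).
    apply exp_ln; exact Hu. }
  destruct (Zfloor_bound t) as [Hlo Hhi].
  rewrite plus_IZR. split.
  - rewrite <- Ht. apply Rle_Rpower; lra.
  - rewrite <- Ht. apply Rpower_lt; lra.
Qed.

Definition ramp (l : Z) (u : R) : R := Rmin (Rmax (u - pow2 l) 0) (pow2 l).

Lemma ramp_nonneg l u : 0 <= ramp l u.
Proof. pose proof (pow2_pos l). unfold ramp; minmax_cases. Qed.

Lemma ramp_le l u : ramp l u <= pow2 l.
Proof. pose proof (pow2_pos l). unfold ramp; minmax_cases. Qed.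

Lemma ramp_mono l u v : u <= v -> ramp l u <= ramp l v.
Proof. pose proof (pow2_pos l). unfold ramp; minmax_cases. Qed.

Lemma ramp_full l u : 2 * pow2 l <= u -> ramp l u = pow2 l.
Proof. pose proof (pow2_pos l). unfold ramp; minmax_cases. Qed.

Lemma ramp_zero l u : u <= pow2 l -> ramp l u = 0.
Proof. pose proof (pow2_pos l). unfold ramp; minmax_cases. Qed.

Lemma ramp_flat l l' a b : l' <> l -> pow2 l <= a -> a <= b -> b <= 2 * pow2 l ->
  ramp l' a = ramp l' b.
Proof.
  intros Hne Ha Hab Hb. destruct (Z_lt_le_dec l' l) as [Hlt | Hge].
  - assert (2 * pow2 l' <= pow2 l).
    { rewrite <- pow2_succ. apply pow2_le. lia. }
    rewrite !ramp_full; lra.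
  - assert (2 * pow2 l <= pow2 l').
    { rewrite <- pow2_succ. apply pow2_le. lia. }
    rewrite !ramp_zero; lra.
Qed.

(* Split [u, v] at its intersection [a, b] with [2^l, 2^(l+1)], on which every other ramp is
   constant. *)
Lemma sum_ramp_incr_le L u v : NoDup L -> u <= v ->
  sumR (fun l => ramp l v - ramp l u) L <= v - u.
Proof.
  revert u v. induction L as [|l L IH]; simpl; intros u v Hnd Huv; [lra|].
  inversion Hnd as [|? ? HlL HndL]; subst.
  pose proof (pow2_pos l).
  set (a := Rmax u (Rmin (pow2 l) v)). set (b := Rmax a (Rmin (2 * pow2 l) v)).
  assert (Hab : u <= a <= b /\ b <= v) by (unfold b, a; minmax_cases).
  assert (Hl : ramp l v - ramp l u = b - a) by (unfold ramp, b, a; minmax_cases).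
  assert (Hmid : a = b \/ pow2 l <= a /\ b <= 2 * pow2 l) by (unfold b, a; minmax_cases).
  assert (Hsplit : sumR (fun l' => ramp l' v - ramp l' u) L =
     sumR (fun l' => ramp l' v - ramp l' b) L + sumR (fun l' => ramp l' b - ramp l' a) L
     + sumR (fun l' => ramp l' a - ramp l' u) L).
  { rewrite <- !sumR_add. apply sumR_ext. intros; lra. }
  assert (Hflat : sumR (fun l' => ramp l' b - ramp l' a) L = 0).
  { apply sumR_eq0. intros l' Hl'. destruct Hmid as [<- | [Ha Hb]]; [lra|].
    rewrite (ramp_flat l l' a b); [lra | intros ->; contradiction | lra..]. }
  pose proof (IH b v HndL ltac:(lra)). pose proof (IH u a HndL ltac:(lra)).
  lra.
Qed.

Lemma sum_ramp_dist_le L u v : NoDup L ->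
  sumR (fun l => Rabs (ramp l v - ramp l u)) L <= Rabs (v - u).
Proof.
  intros Hnd. destruct (Rle_dec u v) as [Huv | Hvu].
  - rewrite (Rabs_right (v - u)) by lra.
    eapply Rle_trans; [|apply (sum_ramp_incr_le L u v Hnd Huv)].
    apply sumR_le. intros l _. pose proof (ramp_mono l u v Huv).
    rewrite Rabs_right; lra.
  - rewrite (Rabs_left1 (v - u)), Ropp_minus_distr by lra.
    eapply Rle_trans; [|apply (sum_ramp_incr_le L v u Hnd ltac:(lra))].
    apply sumR_le. intros l _. pose proof (ramp_mono l v u ltac:(lra)).
    rewrite Rabs_left1; lra.
Qed.

Lemma sum_ramp_le L u : NoDup L -> 0 <= u -> sumR (fun l => ramp l u) L <= u.
Proof.
  intros Hnd Hu. pose proof (sum_ramp_incr_le L 0 u Hnd Hu) as H.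
  rewrite (sumR_ext _ (fun l => ramp l u)) in H; [lra|].
  intros l _. rewrite (ramp_zero l 0) by (pose proof (pow2_pos l); lra). lra.
Qed.

Lemma upd_same {M : Type} (c : config M) i x : upd c i x i = x.
Proof. unfold upd. now rewrite Nat.eqb_refl. Qed.

Lemma upd_other {M : Type} (c : config M) i x j : j <> i -> upd c i x j = c j.
Proof. intros Hji. unfold upd. now rewrite (proj2 (Nat.eqb_neq j i) Hji). Qed.

Fixpoint Forall_indexed {A : Type} (P : nat -> A -> Prop) (k : nat) (sg : list A) : Prop :=
  match sg with
  | [] => True
  | r :: sg' => P k r /\ Forall_indexed P (S k) sg'
  end.

Lemma Forall_indexed_nth {A : Type} (P : nat -> A -> Prop) (a0 : A) k sg :
  (forall t, (t < length sg)%nat -> P (k + t)%nat (nth t sg a0)) -> Forall_indexed P k sg.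
Proof.
  revert k. induction sg as [|r sg IH]; simpl; intros k HP; [exact I|]. split.
  - rewrite <- (Nat.add_0_r k). apply (HP 0%nat). lia.
  - apply IH. intros t Ht. replace (S k + t)%nat with (k + S t)%nat by lia.
    apply (HP (S t)). lia.
Qed.

Section Opt.
Context {X : Type} (dX : X -> X -> R) (s0 : X).
Hypothesis dX_nonneg : forall x y, 0 <= dX x y.

Lemma serve_cost_nonneg f k c sg : 0 <= serve_cost dX f k c sg.
Proof.
  revert k c. induction sg as [|r sg IH]; simpl; intros k c; [lra|].
  pose proof (dX_nonneg (c (f k)) r). pose proof (IH (S k) (upd c (f k) r)). lra.
Qed.

Lemma OPT_is_glb sg : is_glb_Rbar (fun x => exists f, x = sched_cost dX s0 f sg)
  (Finite (OPT dX s0 sg)).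
Proof.
  set (E := fun x => exists f, x = sched_cost dX s0 f sg).
  pose proof (Glb_Rbar_correct E) as HE. unfold OPT. fold E. revert HE.
  destruct (Glb_Rbar E) as [g| |]; simpl; intros [Hlb Hglb].
  - now split.
  - exfalso. apply (Hlb (sched_cost dX s0 (fun _ => 0%nat) sg)). now exists (fun _ => 0%nat).
  - exfalso. apply (Hglb (Finite 0)). intros x [f ->]. apply serve_cost_nonneg.
Qed.

Lemma OPT_le_sched_cost f sg : OPT dX s0 sg <= sched_cost dX s0 f sg.
Proof. apply (proj1 (OPT_is_glb sg)). now exists f. Qed.

Lemma le_OPT y sg : (forall f, y <= sched_cost dX s0 f sg) -> y <= OPT dX s0 sg.
Proof. intros Hy. apply (proj2 (OPT_is_glb sg) (Finite y)). intros x [f ->]. apply Hy. Qed.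

Lemma OPT_nonneg sg : 0 <= OPT dX s0 sg.
Proof. apply le_OPT. intros f. apply serve_cost_nonneg. Qed.

End Opt.

(* Server [0] stays at the source; server [ring_server l j] plays the part of server [j] of
   ring [l]. *)
Definition ring_server (l : Z) (j : nat) : nat :=
  S (Cantor.to_nat (Cantor.to_nat (Z.to_nat l, Z.to_nat (- l)), j)).

Lemma ring_server_neq0 l j : ring_server l j <> 0%nat.
Proof. discriminate. Qed.

Lemma ring_server_inj l j l' j' : ring_server l j = ring_server l' j' -> l = l' /\ j = j'.
Proof.
  unfold ring_server. intros E%Nat.succ_inj.
  apply (f_equal Cantor.of_nat) in E. rewrite !Cantor.cancel_of_to in E.
  apply pair_equal_spec in E as [E Ej].
  apply (f_equal Cantor.of_nat) in E. rewrite !Cantor.cancel_of_to in E.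
  apply pair_equal_spec in E as [Ep En]. split; [lia | exact Ej].
Qed.

Definition near (l : Z) (u : R) : Prop := pow2 l < u < 5 * pow2 l.

Definition near_dec (l : Z) (u : R) : {near l u} + {~ near l u}.
Proof.
  unfold near. destruct (Rlt_dec (pow2 l) u), (Rlt_dec u (5 * pow2 l));
    [left | right..]; tauto.
Defined.

Lemma near_log2_floor l u : near l u -> (log2_floor u - 2 <= l <= log2_floor u)%Z.
Proof.
  intros [Hlo Hhi]. pose proof (pow2_pos l).
  destruct (log2_floor_spec u ltac:(lra)) as [Hfl Hfu]. split.
  - assert (Hlt : pow2 (log2_floor u) < pow2 (l + 1 + 1 + 1)) by (rewrite !pow2_succ; lra).
    apply pow2_lt_inv in Hlt. lia.
  - assert (Hlt : pow2 l < pow2 (log2_floor u + 1)) by lra.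
    apply pow2_lt_inv in Hlt. lia.
Qed.

Section Rings.
Variables (M : Type) (d : M -> M -> R) (s : M).
Hypothesis Hd : is_metric d.

Let dist_nonneg : forall x y, 0 <= d x y := metric_nonneg d Hd.
Let dist_sym : forall x y, d x y = d y x := metric_sym d Hd.
Let dist_triangle : forall x y z, d x z <= d x y + d y z := metric_triangle d Hd.
Let dist_self x : d x x = 0 := proj2 (metric_eq0 d Hd x x) eq_refl.

Definition ring_of (x : M) : Z := (log2_floor (d s x) - 1)%Z.

Definition in_ring (l : Z) (x : M) : bool :=
  if Req_dec_T (d s x) 0 then false else Z.eqb (ring_of x) l.

Lemma in_ring_true l x : in_ring l x = true -> d s x <> 0 /\ ring_of x = l.
Proof. unfold in_ring. destruct Req_dec_T; [discriminate|]. now intros ->%Z.eqb_eq. Qed.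

Lemma in_ring_of x : d s x <> 0 -> in_ring (ring_of x) x = true.
Proof. intros Hx. unfold in_ring. destruct Req_dec_T; [contradiction|]. apply Z.eqb_refl. Qed.

Lemma in_ring_bounds l x : in_ring l x = true -> 2 * pow2 l <= d s x < 4 * pow2 l.
Proof.
  intros [Hx Hl]%in_ring_true. pose proof (dist_nonneg s x).
  destruct (log2_floor_spec (d s x) ltac:(lra)) as [Hlo Hhi].
  unfold ring_of in Hl. replace (log2_floor (d s x)) with (l + 1)%Z in * by lia.
  rewrite !pow2_succ in Hhi. rewrite pow2_succ in Hlo. lra.
Qed.

Definition proj_ring (l : Z) (x : M) : option M := if in_ring l x then Some x else None.

Lemma proj_ring_source l : proj_ring l s = None.
Proof.
  unfold proj_ring, in_ring. rewrite dist_self.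
  destruct Req_dec_T; [reflexivity | contradiction].
Qed.

Definition trunc_dist (l : Z) (a b : option M) : R :=
  match a, b with
  | None, None => 0
  | Some x, Some y => Rmin (d x y) (pow2 l)
  | _, _ => pow2 l
  end.

Lemma trunc_dist_metric l : is_metric (trunc_dist l).
Proof.
  pose proof (pow2_pos l). constructor.
  - intros [x|] [y|]; simpl; try lra. pose proof (dist_nonneg x y). minmax_cases.
  - intros [x|] [y|]; simpl; split; intros H'; try congruence; try lra.
    + f_equal. apply (metric_eq0 d Hd). pose proof (dist_nonneg x y).
      revert H'. minmax_cases.
    + injection H' as ->. rewrite dist_self. minmax_cases.
  - intros [x|] [y|]; simpl; try rewrite dist_sym; reflexivity.
  - intros [x|] [y|] [z|]; simpl; try lra.
    + pose proof (dist_triangle x y z). pose proof (dist_nonneg x y).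
      pose proof (dist_nonneg y z). minmax_cases.
    + pose proof (dist_nonneg x y). minmax_cases.
    + pose proof (dist_nonneg x z). minmax_cases.
    + pose proof (dist_nonneg y z). minmax_cases.
Qed.

Lemma trunc_dist_uniform l : uniform_source (trunc_dist l) None.
Proof. intros [p|] [q|] Hp Hq; simpl; congruence. Qed.

Lemma trunc_dist_nonneg l a b : 0 <= trunc_dist l a b.
Proof. apply (metric_nonneg _ (trunc_dist_metric l)). Qed.

Definition ring_potential (l : Z) (o : option M) (x : M) : R :=
  match o with None => 0 | Some q => Rmin (d q x) (pow2 l) - ramp l (d s x) end.

(* A server away from the band [near l] is at distance at least [2^l] from ring [l]. *)
Lemma trunc_gain_le l q x r : in_ring l q = true ->
  Rmin (d q r) (pow2 l) - Rmin (d q x) (pow2 l) <=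
  if near_dec l (d s x) then d x r else 0.
Proof.
  intros Hq. destruct (in_ring_bounds l q Hq) as [Hq1 Hq2]. pose proof (pow2_pos l).
  pose proof (dist_triangle q x r). pose proof (dist_nonneg q r).
  pose proof (dist_nonneg x r). pose proof (dist_nonneg q x).
  destruct near_dec as [_ | Hfar]; [minmax_cases|].
  assert (pow2 l <= d q x).
  { destruct (Rle_dec (d s x) (pow2 l)).
    - pose proof (dist_triangle s x q). rewrite (dist_sym x q) in *. lra.
    - assert (5 * pow2 l <= d s x).
      { apply Rnot_lt_le. intros Hlt. apply Hfar. split; lra. }
      pose proof (dist_triangle s q x). lra. }
  minmax_cases.
Qed.

Lemma ring_potential_step l o x r : (forall q, o = Some q -> in_ring l q = true) ->
  (if in_ring l r then trunc_dist l o (Some r) else 0)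
  + ring_potential l (if in_ring l r then Some r else o) r - ring_potential l o x
  <= (if in_ring l r then d x r else 0) + (if near_dec l (d s x) then d x r else 0)
     + Rabs (ramp l (d s r) - ramp l (d s x)).
Proof.
  intros Ho. pose proof (dist_nonneg x r).
  assert (0 <= if near_dec l (d s x) then d x r else 0) by (destruct near_dec; lra).
  pose proof (Rabs_pos (ramp l (d s r) - ramp l (d s x))).
  destruct (in_ring l r) eqn:Er.
  - pose proof (in_ring_bounds l r Er). pose proof (pow2_pos l).
    simpl. rewrite dist_self. rewrite (ramp_full l (d s r)) in * by lra.
    destruct o as [q|]; simpl; [|minmax_cases].
    pose proof (ramp_le l (d s x)). pose proof (dist_triangle q x r).
    pose proof (dist_nonneg q r). pose proof (dist_nonneg q x). minmax_cases.
  - destruct o as [q|]; simpl; [|lra].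
    pose proof (trunc_gain_le l q x r (Ho q eq_refl)).
    pose proof (Rle_abs (ramp l (d s x) - ramp l (d s r))) as Habs.
    rewrite Rabs_minus_sym in Habs. lra.
Qed.

Section Potential.
Variable L : list Z.
Hypothesis HL : NoDup L.

(* [o l] is the last point of ring [l] served by the server sitting at [x]. *)
Definition potential (x : M) (o : Z -> option M) : R :=
  d s x + sumR (fun l => ring_potential l (o l) x) L.

Lemma potential_ext x o o' : (forall l, o l = o' l) -> potential x o = potential x o'.
Proof. intros E. unfold potential. f_equal. apply sumR_ext. intros l _. now rewrite E. Qed.

Lemma potential_nonneg x o : 0 <= potential x o.
Proof.
  unfold potential. pose proof (sum_ramp_le L (d s x) HL (dist_nonneg s x)).
  assert (Hterms : sumR (fun l => - ramp l (d s x)) L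
                   <= sumR (fun l => ring_potential l (o l) x) L).
  { apply sumR_le. intros l _. pose proof (ramp_nonneg l (d s x)).
    destruct (o l) as [q|]; simpl; [|lra].
    pose proof (pow2_pos l). pose proof (dist_nonneg q x). minmax_cases. }
  rewrite sumR_opp in Hterms. lra.
Qed.

Lemma potential_source : potential s (fun _ => None) = 0.
Proof. unfold potential. rewrite dist_self, sumR_eq0; auto. lra. Qed.

Lemma potential_step o x r : (forall l q, o l = Some q -> in_ring l q = true) ->
  sumR (fun l => if in_ring l r then trunc_dist l (o l) (Some r) else 0) L
  + potential r (fun l => if in_ring l r then Some r else o l) - potential x o
  <= 6 * d x r.
Proof.
  intros Ho. unfold potential. pose proof (dist_nonneg x r).
  assert (Hring : sumR (fun l => if in_ring l r then d x r else 0) L <= INR 1 * d x r).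
  { apply (sumR_le_support Z.eq_dec _ _ [ring_of r]); auto.
    - intros l _. destruct in_ring; lra.
    - intros l _ Hl. destruct in_ring eqn:Er; [|lra].
      exfalso. apply Hl. apply in_ring_true in Er as [_ <-]. now left. }
  assert (Hnear : sumR (fun l => if near_dec l (d s x) then d x r else 0) L <= INR 3 * d x r).
  { set (f := log2_floor (d s x)).
    apply (sumR_le_support Z.eq_dec _ _ [(f - 2)%Z; (f - 1)%Z; f]); auto.
    - intros l _. destruct near_dec; lra.
    - intros l _ Hl. destruct near_dec as [Hn|]; [|lra].
      exfalso. apply Hl. apply near_log2_floor in Hn. fold f in Hn.
      assert (Hl3 : l = (f - 2)%Z \/ l = (f - 1)%Z \/ l = f) by lia.
      destruct Hl3 as [-> | [-> | ->]]; simpl; auto. }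
  assert (Hramp : Rabs (d s r - d s x) <= d x r).
  { apply Rabs_le. pose proof (dist_triangle s x r). pose proof (dist_triangle s r x).
    rewrite (dist_sym r x) in *. lra. }
  pose proof (sum_ramp_dist_le L (d s x) (d s r) HL).
  assert (Hstep : sumR (fun l => (if in_ring l r then trunc_dist l (o l) (Some r) else 0)
      + ring_potential l (if in_ring l r then Some r else o l) r - ring_potential l (o l) x) L
      <= 5 * d x r).
  { eapply Rle_trans.
    { apply sumR_le. intros l _. apply ring_potential_step. apply Ho. }
    rewrite !sumR_add. simpl INR in *. lra. }
  unfold Rminus in Hstep. rewrite !sumR_add, sumR_opp in Hstep.
  pose proof (dist_triangle s x r). lra.
Qed.

Definition servers_potential (J : list nat) (c : config M) (cl : Z -> config (option M)) : R :=
  sumR (fun j => potential (c j) (fun l => cl l (S j))) J.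

Lemma servers_potential_upd J c cl j r (fl : Z -> nat) : NoDup J -> In j J ->
  (forall l, fl l = if in_ring l r then S j else 0%nat) ->
  servers_potential J (upd c j r) (fun l => upd (cl l) (fl l) (proj_ring l r))
  = servers_potential J c cl
    + (potential r (fun l => if in_ring l r then Some r else cl l (S j))
       - potential (c j) (fun l => cl l (S j))).
Proof.
  intros HJ Hj Hfl. unfold servers_potential.
  rewrite (sumR_update (fun j => potential (c j) (fun l => cl l (S j))) _ J j HJ Hj).
  - rewrite upd_same. do 2 f_equal. apply potential_ext. intros l.
    unfold proj_ring. rewrite Hfl.
    destruct (in_ring l r); [apply upd_same | rewrite upd_other; auto].
  - intros j' Hj'. rewrite upd_other by exact Hj'. apply potential_ext.
    intros l. rewrite Hfl, upd_other; [reflexivity|].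
    destruct (in_ring l r); lia.
Qed.

End Potential.

Definition ring_states_ok (cl : Z -> config (option M)) : Prop :=
  (forall l, cl l 0%nat = None) /\ (forall l j q, cl l (S j) = Some q -> in_ring l q = true).

Lemma ring_states_ok_upd cl j r (fl : Z -> nat) : ring_states_ok cl ->
  (forall l, fl l = if in_ring l r then S j else 0%nat) ->
  ring_states_ok (fun l => upd (cl l) (fl l) (proj_ring l r)).
Proof.
  intros [Hcl0 Hcl] Hfl. split.
  - intros l. unfold proj_ring. rewrite Hfl.
    destruct (in_ring l r); [rewrite upd_other by lia; apply Hcl0 | apply upd_same].
  - intros l j' q. destruct (Nat.eq_dec (S j') (fl l)) as [E | E].
    + rewrite E, upd_same. unfold proj_ring. destruct (in_ring l r) eqn:Er; [|discriminate].
      now intros [= <-].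
    + rewrite upd_other by exact E. apply Hcl.
Qed.

(* Server [S j] of every ring shadows server [j] of [M]; server [0] of every ring stays at
   the source and serves the requests lying outside the ring. *)
Lemma ring_costs_le_amortized L J f fl : NoDup L -> NoDup J -> forall sg k c cl,
  ring_states_ok cl ->
  Forall_indexed (fun k r =>
    In (f k) J /\ forall l, fl l k = if in_ring l r then S (f k) else 0%nat) k sg ->
  sumR (fun l => serve_cost (trunc_dist l) (fl l) k (cl l) (map (proj_ring l) sg)) L
  <= 6 * serve_cost d f k c sg + servers_potential L J c cl.
Proof.
  intros HL HJ sg. induction sg as [|r sg IH]; intros k c cl Hcl Hsg.
  - simpl. rewrite sumR_eq0 by auto.
    assert (0 <= servers_potential L J c cl)
      by (apply sumR_nonneg; intros; apply potential_nonneg, HL). lra.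
  - destruct Hsg as [[HfJ Hfl] Hrest]. cbn [serve_cost map]. rewrite sumR_add.
    pose proof (IH (S k) (upd c (f k) r) _
                  (ring_states_ok_upd cl (f k) r (fun l => fl l k) Hcl Hfl) Hrest) as Hrec.
    cbv beta in Hrec.
    rewrite (servers_potential_upd L J c cl (f k) r (fun l => fl l k) HJ HfJ Hfl) in Hrec.
    assert (Hcost : sumR (fun l => trunc_dist l (cl l (fl l k)) (proj_ring l r)) L
      = sumR (fun l => if in_ring l r then trunc_dist l (cl l (S (f k))) (Some r) else 0) L).
    { apply sumR_ext. intros l _. unfold proj_ring. rewrite Hfl.
      destruct (in_ring l r); [reflexivity | now rewrite (proj1 Hcl)]. }
    pose proof (potential_step L HL (fun l => cl l (S (f k))) (c (f k)) r
                  (fun l q => proj2 Hcl l (f k) q)).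
    lra.
Qed.

Lemma sum_OPT_ring_le L sg : NoDup L ->
  sumR (fun l => OPT (trunc_dist l) None (map (proj_ring l) sg)) L <= 6 * OPT d s sg.
Proof.
  intros HL.
  enough (Hf : forall f, sumR (fun l => OPT (trunc_dist l) None (map (proj_ring l) sg)) L / 6
                         <= sched_cost d s f sg)
    by (apply (le_OPT d s dist_nonneg) in Hf; lra).
  intros f.
  set (J := nodup Nat.eq_dec (map f (seq 0 (length sg)))).
  set (fl := fun l k => if in_ring l (nth k sg s) then S (f k) else 0%nat).
  assert (Hsim := ring_costs_le_amortized L J f fl HL (NoDup_nodup _ _) sg 0%nat
                    (fun _ => s) (fun _ _ => None)).
  unfold servers_potential in Hsim.
  rewrite (sumR_eq0 (fun _ => potential L s (fun _ => None))) in Hsim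
    by (intros; apply potential_source).
  rewrite Rplus_0_r in Hsim.
  assert (sumR (fun l => OPT (trunc_dist l) None (map (proj_ring l) sg)) L
          <= 6 * sched_cost d s f sg); [|lra].
  eapply Rle_trans; [|unfold sched_cost; apply Hsim; auto].
  - apply sumR_le. intros l _. apply OPT_le_sched_cost, trunc_dist_nonneg.
  - split; congruence.
  - apply (Forall_indexed_nth _ s). intros t Ht. split; [|reflexivity].
    apply nodup_In, in_map, in_seq. lia.
Qed.

Definition servers_track (c : config M) (cl : Z -> config (option M)) : Prop :=
  c 0%nat = s /\
  forall l j, (c (ring_server l j) = s \/ in_ring l (c (ring_server l j)) = true) /\
              (cl l j = None \/ cl l j = Some (c (ring_server l j))).

Lemma servers_track_init : servers_track (fun _ => s) (fun _ _ => None).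
Proof. split; [reflexivity | intros l j; split; left; reflexivity]. Qed.

Lemma servers_track_upd c cl r i (Fl : Z -> nat) : servers_track c cl ->
  (d s r = 0 -> i = 0%nat) -> (d s r <> 0 -> i = ring_server (ring_of r) (Fl (ring_of r))) ->
  servers_track (upd c i r) (fun l => upd (cl l) (Fl l) (proj_ring l r)).
Proof.
  intros [Hc0 Htrack] Hi0 Hi. destruct (Req_dec_T (d s r) 0) as [Hr | Hr].
  - rewrite (Hi0 Hr). apply (metric_eq0 d Hd) in Hr as <-. split; [apply upd_same|].
    intros l j. rewrite upd_other by apply ring_server_neq0. split; [apply Htrack|].
    destruct (Nat.eq_dec j (Fl l)) as [-> | Hj].
    + rewrite upd_same, proj_ring_source. now left.
    + rewrite upd_other by exact Hj. apply Htrack.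
  - rewrite (Hi Hr). split.
    { rewrite upd_other; [exact Hc0 | intros E; apply (ring_server_neq0 _ _ (eq_sym E))]. }
    intros l j.
    destruct (Nat.eq_dec (ring_server l j) (ring_server (ring_of r) (Fl (ring_of r))))
      as [E | E].
    + apply ring_server_inj in E as [-> ->]. rewrite !upd_same.
      unfold proj_ring. rewrite in_ring_of by exact Hr. split; now right.
    + rewrite upd_other by exact E. split; [apply Htrack|].
      destruct (Nat.eq_dec j (Fl l)) as [-> | Hj]; [|rewrite upd_other by exact Hj; apply Htrack].
      rewrite upd_same. unfold proj_ring. destruct (in_ring l r) eqn:Er; [|now left].
      apply in_ring_true in Er as [_ <-]. contradiction.
Qed.

(* Both endpoints lie within [4 * 2^l] of [s], so the move is shorter than [8 * 2^l]. *)
Lemma ring_move_le c cl i j r : servers_track c cl -> in_ring i r = true ->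
  d (c (ring_server i j)) r <= 8 * trunc_dist i (cl i j) (Some r).
Proof.
  intros [_ Htrack] Hr. destruct (Htrack i j) as [Hx Hcl].
  set (x := c (ring_server i j)) in *.
  pose proof (in_ring_bounds i r Hr). pose proof (pow2_pos i). pose proof (dist_nonneg x r).
  assert (d x r < 8 * pow2 i).
  { destruct Hx as [-> | Hx]; [lra|].
    pose proof (in_ring_bounds i x Hx). pose proof (dist_triangle x s r).
    rewrite (dist_sym x s) in *. lra. }
  destruct Hcl as [-> | ->]; simpl; minmax_cases.
Qed.

Lemma serve_cost_le_ring_costs L F Fl : forall sg k c cl, servers_track c cl ->
  Forall_indexed (fun k r =>
    (d s r = 0 -> F k = 0%nat) /\
    (d s r <> 0 -> F k = ring_server (ring_of r) (Fl (ring_of r) k) /\ In (ring_of r) L)) k sg ->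
  serve_cost d F k c sg
  <= 8 * sumR (fun l => serve_cost (trunc_dist l) (Fl l) k (cl l) (map (proj_ring l) sg)) L.
Proof.
  intros sg. induction sg as [|r sg IH]; intros k c cl Htrack Hsg.
  - simpl. rewrite sumR_eq0 by auto. lra.
  - destruct Hsg as [[HF0 HF] Hrest]. cbn [serve_cost map]. rewrite sumR_add.
    pose proof (IH (S k) _ _ (servers_track_upd c cl r (F k) (fun l => Fl l k) Htrack HF0
                  (fun Hr => proj1 (HF Hr))) Hrest) as Hrec.
    assert (0 <= sumR (fun l => trunc_dist l (cl l (Fl l k)) (proj_ring l r)) L)
      by (apply sumR_nonneg; intros; apply trunc_dist_nonneg).
    assert (d (c (F k)) r
            <= 8 * sumR (fun l => trunc_dist l (cl l (Fl l k)) (proj_ring l r)) L); [|lra].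
    destruct (Req_dec_T (d s r) 0) as [Hr | Hr].
    { rewrite (HF0 Hr), (proj1 Htrack), Hr. lra. }
    destruct (HF Hr) as [-> Hin].
    eapply Rle_trans; [apply ring_move_le; [exact Htrack | apply in_ring_of, Hr]|].
    apply Rmult_le_compat_l; [lra|].
    replace (Some r) with (proj_ring (ring_of r) r)
      by (unfold proj_ring; now rewrite in_ring_of by exact Hr).
    apply (sumR_term_le (fun l => trunc_dist l (cl l (Fl l k)) (proj_ring l r)));
      [intros; apply trunc_dist_nonneg | exact Hin].
Qed.

Definition combined_alg (Al : Z -> online_alg (option M)) : online_alg M :=
  fun past r =>
    if Req_dec_T (d s r) 0 then 0%nat
    else ring_server (ring_of r) (Al (ring_of r) (map (proj_ring (ring_of r)) past) (Some r)).

Lemma ALG_combined_le Al sg :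
  ALG d s (combined_alg Al) sg <=
  8 * sumR (fun l => ALG (trunc_dist l) None (Al l) (map (proj_ring l) sg))
           (nodup Z.eq_dec (map ring_of sg)).
Proof.
  apply serve_cost_le_ring_costs; [apply servers_track_init|].
  apply (Forall_indexed_nth _ s). intros t Ht. simpl.
  unfold alg_sched, combined_alg. set (r := nth t sg s).
  destruct (Req_dec_T (d s r) 0) as [Hr | Hr]; [split; [reflexivity | contradiction]|].
  split; [contradiction|]. intros _. split.
  - rewrite firstn_map, <- (proj_ring_source (ring_of r)), map_nth. fold r.
    unfold proj_ring at 3. now rewrite in_ring_of.
  - apply nodup_In, in_map, nth_In, Ht.
Qed.

Lemma combined_strictly_competitive rho Al :
  (forall l, strictly_competitive (trunc_dist l) None (Al l) rho) ->
  strictly_competitive d s (combined_alg Al) (48 * Rmax rho 0).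
Proof.
  intros HAl sg. set (L := nodup Z.eq_dec (map ring_of sg)).
  pose proof (Rmax_l rho 0). pose proof (Rmax_r rho 0).
  assert (Hrings : sumR (fun l => ALG (trunc_dist l) None (Al l) (map (proj_ring l) sg)) L
    <= Rmax rho 0 * sumR (fun l => OPT (trunc_dist l) None (map (proj_ring l) sg)) L).
  { rewrite <- sumR_scal_l. apply sumR_le. intros l _. eapply Rle_trans; [apply HAl|].
    apply Rmult_le_compat_r; [apply OPT_nonneg, trunc_dist_nonneg | lra]. }
  pose proof (sum_OPT_ring_le L sg (NoDup_nodup _ _)) as Hopt.
  pose proof (ALG_combined_le Al sg) as Halg. fold L in Halg.
  assert (Rmax rho 0 * sumR (fun l => OPT (trunc_dist l) None (map (proj_ring l) sg)) L
          <= Rmax rho 0 * (6 * OPT d s sg)) by (apply Rmult_le_compat_l; lra).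
  lra.
Qed.

End Rings.

Theorem corollary3 :
  (exists rho : R,
     forall (M : Type) (d : M -> M -> R) (s : M),
       is_metric d -> uniform_source d s ->
       exists A : online_alg M, strictly_competitive d s A rho) ->
  forall (M : Type) (d : M -> M -> R) (s : M),
    is_metric d -> competitive d s.
Proof.
  intros [rho Hrho] M d s Hd.
  destruct (choice (fun l A => strictly_competitive (trunc_dist M d l) None A rho)) as [Al HAl].
  { intros l. apply Hrho; [apply trunc_dist_metric, Hd | apply trunc_dist_uniform]. }
  exists (combined_alg M d s Al), (48 * Rmax rho 0), 0. intros sg.
  rewrite Rplus_0_r. apply combined_strictly_competitive; assumption.
Qed.
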